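(* For each $i\in\{1,\dots,n\}$ let a linear basis warp be given by a feature map $\beta_i:\mathbb{R}^d\to\mathbb{R}^{l_i}$, a regularization matrix $Z_i\in\mathbb{R}^{k_i\times l_i}$ and a weight $\mu_i\ge0$, and let $D_i\in\mathbb{R}^{d\times m}$ be a datum shape with $\mathcal{B}_i=\mathcal{B}_i(D_i)$, such that $M_i=\mathcal{B}_i\mathcal{B}_i^{\top}+\mu_iZ_i^{\top}Z_i$ is invertible. Suppose each of these warps contains free-translations. Then, with $Q_i=\mathcal{B}_i^{\top}M_i^{-1}\mathcal{B}_i$, $\mathcal{Q}_{II}=\sum_iQ_i$ and $\mathcal{P}_{II}=nI_m-\mathcal{Q}_{II}$, all of the following hold: $\mathcal{P}_{II}\mathbf{1}=0$; $\mathcal{Q}_{II}\mathbf{1}=n\mathbf{1}$; $Q_i\mathbf{1}=\mathbf{1}$ for all $i$; $\mathrm{tr}((S+t\mathbf{1}^{\top})\mathcal{P}_{II}(S+t\mathbf{1}^{\top})^{\top})=\mathrm{tr}(S\mathcal{P}_{II}S^{\top})$ for all $S\in\mathbb{R}^{d\times m}$, $t\in\mathbb{R}^d$; and for every $i$ there is $x_i$ with $\mathcal{B}_i^{\top}x_i=\mathbf{1}$ and, if $\mu_i>0$, $Z_ix_i=0$.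
   Context: A linear basis warp (LBW) with feature map $\beta:\mathbb{R}^d\to\mathbb{R}^l$ is the map $p\mapsto W^{\top}\beta(p)$ with parameter $W\in\mathbb{R}^{l\times d}$, regularized by $\mu\|ZW\|_F^2$. For a point cloud $D=[p_1,\dots,p_m]\in\mathbb{R}^{d\times m}$, $\mathcal{B}(D)=[\beta(p_1),\dots,\beta(p_m)]\in\mathbb{R}^{l\times m}$. The LBW $(\beta,Z,\mu)$ contains free-translations if there exists $x\in\mathbb{R}^l$, independent of the input, with $\beta(p)^{\top}x=1$ for all $p\in\mathbb{R}^d$ (i.e. $\mathcal{B}(D)^{\top}x=\mathbf{1}$ for every point cloud $D$), and, if $\mu>0$, additionally $Zx=0$. $\mathbf{1}$ denotes the all-ones vector. *)

From HB Require Import structures.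
From mathcomp Require Import all_boot all_order all_algebra.
Set Implicit Arguments. Unset Strict Implicit. Unset Printing Implicit Defensive.
Import Order.TTheory GRing.Theory Num.Theory.
Local Open Scope ring_scope.

Definition ones (R : realFieldType) (m : nat) : 'cV[R]_m := const_mx 1.

Definition calB (R : realFieldType) (d l m : nat)
  (beta : 'cV[R]_d -> 'cV[R]_l) (D : 'M[R]_(d, m)) : 'M[R]_(l, m) :=
  \matrix_(r < l, j < m) beta (col j D) r 0.

Definition contains_free_translations (R : realFieldType) (d l k : nat)
  (beta : 'cV[R]_d -> 'cV[R]_l) (Z : 'M[R]_(k, l)) (mu : R) : Prop :=
  exists x : 'cV[R]_l,
    (forall p : 'cV[R]_d, (beta p)^T *m x = 1%:M) /\ (0 < mu -> Z *m x = 0).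

Definition Mmat (R : realFieldType) (d l k m : nat)
  (beta : 'cV[R]_d -> 'cV[R]_l) (Z : 'M[R]_(k, l)) (mu : R) (D : 'M[R]_(d, m))
  : 'M[R]_l :=
  calB beta D *m (calB beta D)^T + mu *: (Z^T *m Z).

Definition Qmat (R : realFieldType) (d l k m : nat)
  (beta : 'cV[R]_d -> 'cV[R]_l) (Z : 'M[R]_(k, l)) (mu : R) (D : 'M[R]_(d, m))
  : 'M[R]_m :=
  (calB beta D)^T *m invmx (Mmat beta Z mu D) *m calB beta D.

From HB Require Import structures.
From mathcomp Require Import all_boot all_order all_algebra.
Set Implicit Arguments. Unset Strict Implicit. Unset Printing Implicit Defensive.
Import Order.TTheory GRing.Theory Num.Theory.
Local Open Scope ring_scope.

(* A free translation x satisfies B^T x = 1 and (as mu >= 0) mu Z x = 0, hence M x = B 1, so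
   Q 1 = B^T M^-1 B 1 = B^T x = 1.  Summing, Q_II 1 = n 1 and P_II 1 = 0; as P_II
   is symmetric, the quadratic form S |-> S P_II S^T is blind to translations
   S + t 1^T. *)

Lemma quad_form_translate_ker (R : comPzRingType) (d m : nat)
    (P : 'M[R]_m) (u : 'cV[R]_m) (S : 'M[R]_(d, m)) (t : 'cV[R]_d) :
  P^T = P -> P *m u = 0 ->
  (S + t *m u^T) *m P *m (S + t *m u^T)^T = S *m P *m S^T.
Proof.
move=> P_sym Pu0.
have PuT0 : P *m (t *m u^T)^T = 0 by rewrite trmx_mul trmxK mulmxA Pu0 mul0mx.
have uTP0 : t *m u^T *m P = 0 by rewrite -mulmxA -P_sym -trmx_mul Pu0 trmx0 mulmx0.
by rewrite linearD /= -mulmxA mulmxDr PuT0 addr0 mulmxA mulmxDl uTP0 addr0.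
Qed.

Lemma mulmx_sum_fixed (R : comPzRingType) (n m : nat)
    (Q : 'I_n -> 'M[R]_m) (u : 'cV[R]_m) :
  (forall i, Q i *m u = u) -> (\sum_(i < n) Q i) *m u = n%:R *: u.
Proof.
move=> Qu; rewrite mulmx_suml (eq_bigr (fun=> u)) => [|i _]; last exact: Qu.
by rewrite sumr_const card_ord scaler_nat.
Qed.

Section FreeTranslations.

Variables (R : realFieldType) (d l k m : nat).
Variables (beta : 'cV[R]_d -> 'cV[R]_l) (Z : 'M[R]_(k, l)) (mu : R).
Variable D : 'M[R]_(d, m).

Lemma trmx_calB_free (x : 'cV[R]_l) :
  (forall p, (beta p)^T *m x = 1%:M) -> (calB beta D)^T *m x = ones R m.
Proof.
move=> betax; apply/matrixP => j o; rewrite (ord1 o) !mxE.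
have := congr1 (fun M : 'M[R]_1 => M 0 0) (betax (col j D)).
rewrite !mxE eqxx /= => betax_jj; apply: etrans betax_jj.
by apply: eq_bigr => r _; rewrite !mxE.
Qed.

Lemma Mmat_free (x : 'cV[R]_l) :
  0 <= mu -> (calB beta D)^T *m x = ones R m -> (0 < mu -> Z *m x = 0) ->
  Mmat beta Z mu D *m x = calB beta D *m ones R m.
Proof.
move=> mu_ge0 Bx Zx; rewrite /Mmat mulmxDl -!mulmxA Bx -scalemxAl -mulmxA.
move: mu_ge0; rewrite le0r => /orP[/eqP->|mu_gt0]; first by rewrite scale0r addr0.
by rewrite Zx // mulmx0 scaler0 addr0.
Qed.

Lemma Qmat_ones :
  0 <= mu -> Mmat beta Z mu D \in unitmx ->
  contains_free_translations beta Z mu -> Qmat beta Z mu D *m ones R m = ones R m.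
Proof.
move=> mu_ge0 M_unit [x [betax Zx]].
have Bx := trmx_calB_free betax.
by rewrite /Qmat -!mulmxA -(Mmat_free mu_ge0 Bx Zx) mulKmx.
Qed.

Lemma Qmat_sym : (Qmat beta Z mu D)^T = Qmat beta Z mu D.
Proof.
have M_sym : (Mmat beta Z mu D)^T = Mmat beta Z mu D.
  by rewrite /Mmat linearD linearZ /= !trmx_mul !trmxK.
by rewrite /Qmat !trmx_mul trmxK trmx_inv M_sym mulmxA.
Qed.

End FreeTranslations.

Theorem proposition4 (R : realFieldType) (n d m : nat)
  (l k : 'I_n -> nat)
  (beta : forall i : 'I_n, 'cV[R]_d -> 'cV[R]_(l i))
  (Z : forall i : 'I_n, 'M[R]_(k i, l i))
  (mu : 'I_n -> R)
  (D : 'I_n -> 'M[R]_(d, m))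
  (hmu : forall i, 0 <= mu i)
  (hinv : forall i, Mmat (beta i) (Z i) (mu i) (D i) \in unitmx)
  (hfree : forall i, contains_free_translations (beta i) (Z i) (mu i)) :
  let QII : 'M[R]_m := \sum_(i < n) Qmat (beta i) (Z i) (mu i) (D i) in
  let PII : 'M[R]_m := (n%:R)%:M - QII in
  [/\ PII *m ones R m = 0,
      QII *m ones R m = n%:R *: ones R m,
      (forall i, Qmat (beta i) (Z i) (mu i) (D i) *m ones R m = ones R m),
      (forall (S : 'M[R]_(d, m)) (t : 'cV[R]_d),
         \tr ((S + t *m (ones R m)^T) *m PII *m (S + t *m (ones R m)^T)^T)
         = \tr (S *m PII *m S^T))
    & (forall i, exists x : 'cV[R]_(l i),
         (calB (beta i) (D i))^T *m x = ones R m /\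
         (0 < mu i -> Z i *m x = 0))].
Proof.
move=> QII PII.
have Q1 i := Qmat_ones (hmu i) (hinv i) (hfree i).
have QII1 : QII *m ones R m = n%:R *: ones R m := mulmx_sum_fixed Q1.
have PII1 : PII *m ones R m = 0 by rewrite mulmxBl QII1 mul_scalar_mx subrr.
have PII_sym : PII^T = PII.
  by rewrite linearB /= tr_scalar_mx raddf_sum (eq_bigr _ (fun i _ => Qmat_sym _ _ _ _)).
split=> // [S t|i]; first by rewrite quad_form_translate_ker.
have [x [betax Zx]] := hfree i.
by exists x; rewrite trmx_calB_free.
Qed.
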